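(* Let $\mathrm P$ be a polymatroid on $E=\{1,\dots,m\}$ of type $\mathbf a$ and rank $r$. Then $$\frac{1}{r!}\deg_{\mathrm P}\Big(\big(\textstyle\sum_{i\in E}t_i h_{\{i\}}\big)^r\Big)=\sum_{\mathbf u\in B(\mathrm P)\cap\mathbb Z^E}\frac{t^{\mathbf u}}{\mathbf u!}$$ as polynomials in $\mathbb Q[t_1,\dots,t_m]$, where $t^{\mathbf u}=t_1^{u_1}\cdots t_m^{u_m}$ and $\mathbf u!=u_1!\cdots u_m!$.
   Context: A polymatroid $\mathrm P$ on $E$ of type $\mathbf a=(a_1,\dots,a_m)$ is a submodular, monotone function $\operatorname{rk}_{\mathrm P}:2^E\to\mathbb Z_{\ge0}$ with $\operatorname{rk}_{\mathrm P}(\emptyset)=0$ and $\operatorname{rk}_{\mathrm P}(\{i\})\le a_i$; rank $r=\operatorname{rk}_{\mathrm P}(E)$. Its base polytope is $B(\mathrm P)=\{x\in\mathbb R^E_{\ge0}:\sum_{i\in S}x_i\le\operatorname{rk}_{\mathrm P}(S)\ \forall S\subseteq E,\ \sum_{i\in E}x_i=r\}$. Let $n=\sum a_i$, $\widetilde E$ a set with $n$ elements, $\pi:\widetilde E\to E$ with $|\pi^{-1}(i)|=a_i$. Compatible pairs $I\le\mathcal F$: $I\subseteq\widetilde E$, chain $\mathcal F=\{F_1\subsetneq\dots\subsetneq F_{k+1}=E\}$ ($k\ge0$) such that $\pi^{-1}(A)\subseteq I$ implies $A\subseteq F_1$. The polystellahedral fan $\Sigma_{\mathbf a}\subset\mathbb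 R^{\widetilde E}$ has cones $\operatorname{cone}(-\mathbf e_{\widetilde E\setminus\pi^{-1}(F_1)},\dots,-\mathbf e_{\widetilde E\setminus\pi^{-1}(F_k)},\mathbf e_j:j\in I)$ (with $\mathbf e_U=\sum_{j\in U}\mathbf e_j$); $X_{\mathbf a}$ is its smooth projective toric variety with degree map $\deg_{X_{\mathbf a}}:A^n(X_{\mathbf a})\to\mathbb Z$. $x_S$ ($\emptyset\subseteq S\subsetneq E$) is the divisor class of the ray $\mathbb R_{\ge0}(-\mathbf e_{\widetilde E\setminus\pi^{-1}(S)})$, and $h_S=\sum_{T\subsetneq E,T\not\supseteq S}x_T$ for nonempty $S$. A flat of $\mathrm P$ is $F$ with $\operatorname{rk}_{\mathrm P}(F\cup e)>\operatorname{rk}_{\mathrm P}(F)$ for $e\notin F$. $\Sigma_{\mathrm P}$ is the subfan of cones $\sigma_{S\le\mathcal F}$ with $F_1,\dots,F_k$ proper flats of $\mathrm P$, $\operatorname{rk}_{\mathrm P}(\pi(T))\ge|T|$ for all $T\subseteq S$, and $\operatorname{rk}_{\mathrm P}(F\cup\pi(T))>\operatorname{rk}_{\mathrm P}(F)+|T|$ for all $F\in\mathcal F$ and nonempty $T\subseteq S\setminus\pi^{-1}(F)$; $[\Sigma_{\mathrm P}]\in A^{n-r}(X_{\mathbf a})$ is the class with $\deg([\Sigma_{\mathrm P}][Z_\sigma])=1$ if $\sigma\in\Sigma_{\mathrm P}$ and $0$ otherwise for $r$-dimensional cones $\sigma$ of $\Sigma_{\mathbf a}$ ($Z_\sigma$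 the orbit closure). $A^\bullet(\mathrm P)=A^\bullet(X_{\mathbf a})/\operatorname{ann}([\Sigma_{\mathrm P}])$ and $\deg_{\mathrm P}(\xi)=\deg_{X_{\mathbf a}}(\xi'[\Sigma_{\mathrm P}])$ for a lift $\xi'$. *)

From HB Require Import structures.
From mathcomp Require Import all_boot all_order all_algebra.
From mathcomp Require Import mpoly.
Set Implicit Arguments. Unset Strict Implicit. Unset Printing Implicit Defensive.
Import Order.TTheory GRing.Theory Num.Theory.
Local Open Scope ring_scope.

Record polymatroid (m : nat) (a : 'I_m -> nat) := Polymatroid {
  prk : {set 'I_m} -> nat;
  prk0 : prk set0 = 0%N;
  prk_mono : forall A B : {set 'I_m}, A \subset B -> (prk A <= prk B)%N;
  prk_submod : forall A B : {set 'I_m},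
      (prk (A :|: B) + prk (A :&: B) <= prk A + prk B)%N;
  prk_type : forall i : 'I_m, (prk [set i] <= a i)%N }.

Section Polystellahedral.
Variables (m : nat) (a : 'I_m -> nat).

(* tilde E : the n = sum a_i element set, pi = tag *)
Definition tE := {i : 'I_m & 'I_(a i)}.
Definition pre (A : {set 'I_m}) : {set tE} := [set j : tE | tag j \in A].
Definition img (T : {set tE}) : {set 'I_m} := [set tag j | j in T].

Definition propS := {S : {set 'I_m} | S != setT}.

(* rays of Sigma_a: inl S  is  -e_{tE \ pi^-1(S)}  (divisor x_S), inr j is e_j *)
Definition ray := (propS + tE)%type.

Definition ray_vec (rho : ray) (j : tE) : int :=
  match rho with
  | inl S0 => if tag j \in val S0 then 0 else -1
  | inr k => ((j == k) : nat)%:Z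
  end.

Definition chainpart (C : {set ray}) : {set propS} := [set S | inl S \in C].
Definition indpart (C : {set ray}) : {set tE} := [set j | inr j \in C].

(* C spans a cone of Sigma_a iff it comes from a compatible pair I <= F *)
Definition is_cone (C : {set ray}) : bool :=
  [forall S1 in chainpart C, forall S2 in chainpart C,
      (val S1 \subset val S2) || (val S2 \subset val S1)] &&
  [forall A : {set 'I_m}, (pre A \subset indpart C) ==>
      [forall S in chainpart C, A \subset val S]].

Variable P : polymatroid a.
Local Notation rk := (prk P).
Definition prank : nat := rk setT.

Definition is_flat (F : {set 'I_m}) : bool :=
  [forall e : 'I_m, (e \notin F) ==> (rk F < rk (e |: F))%N].

Definition in_SigmaP (C : {set ray}) : bool :=
  [&& is_cone C,
      [forall S in chainpart C, is_flat (val S)],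
      [forall T : {set tE}, (T \subset indpart C) ==> (#|T| <= rk (img T))%N] &
      [forall S in chainpart C, forall T : {set tE},
         ((T \subset indpart C :\: pre (val S)) && (T != set0)) ==>
         (rk (val S) + #|T| < rk (val S :|: img T))%N]].

Definition nvar : nat := #|{: ray}|.
Definition X (rho : ray) : {mpoly rat[nvar]} := 'X_(enum_rank rho).
Definition mono (C : {set ray}) : {mpoly rat[nvar]} := \prod_(rho in C) X rho.
Definition linrel (j : tE) : {mpoly rat[nvar]} :=
  \sum_(rho : ray) ((ray_vec rho j)%:~R : rat) *: X rho.

Definition hvar (i : 'I_m) : {mpoly rat[nvar]} :=
  \sum_(S : propS | i \notin val S) X (inl S).

(* L is (a lift to Q[x_rho] of) deg_P : L(f) = deg_X(f_r [Sigma_P]), where f_r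
   is the degree-r part; i.e. L is linear, kills the Stanley-Reisner ideal and
   the linear relations, kills other degrees, and takes value 1/0 on the
   r-dimensional cone monomials according to membership in Sigma_P. *)
Definition deg_spec (L : {mpoly rat[nvar]} -> rat) : Prop :=
  [/\ (forall (c : rat) p q, L (c *: p + q) = c * L p + L q),
      (forall p C, ~~ is_cone C -> L (p * mono C) = 0),
      (forall p j, L (p * linrel j) = 0),
      (forall (d : nat) p, p \is d.-homog -> d != prank -> L p = 0) &
      (forall C, is_cone C -> #|C| = prank -> L (mono C) = (in_SigmaP C)%:R)].

(* integer points of the base polytope B(P) (nonnegativity is automatic for nat) *)
Definition in_base (u : 'I_m -> nat) : bool :=
  [forall S : {set 'I_m}, (\sum_(i in S) u i <= rk S)%N] &&
  (\sum_(i < m) u i == rk setT)%N.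

End Polystellahedral.

From mathcomp Require Import all_boot all_algebra.
From mathcomp Require Import mpoly.
Import GRing.Theory Num.Theory.
Set Implicit Arguments. Unset Strict Implicit. Unset Printing Implicit Defensive.
Local Open Scope ring_scope.

(* Expanding the r-th power by the multinomial theorem, it suffices to show
   that deg_P (prod_i h_i^(u_i)) is 1 if u is in B(P) and 0 otherwise, for
   |u| = r.  The linear relation attached to a coordinate j of tilde E says
   that x_j = h_(pi j) modulo the annihilator of [Sigma_P].  Hence, when
   u_i <= a_i for all i, prod_i h_i^(u_i) is equivalent to the monomial of the
   cone spanned by the e_j for the first u_i elements j of each fibre
   pi^-1(i); that cone lies in Sigma_P exactly when u satisfies the rank
   inequalities of B(P).  When u_i > a_i, the product contains
   h_i * x_(pi^-1(i)) = sum_(S not containing i) x_S x_(pi^-1(i)), and every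
   term is a non-cone because pi^-1(i) in I forces i in F_1. *)

Section FfunCons.
Variables (T : finType) (m : nat).

Definition ffun_cons (x : T) (u : {ffun 'I_m -> T}) : {ffun 'I_m.+1 -> T} :=
  [ffun i => if unlift ord0 i is Some i' then u i' else x].

Lemma ffun_cons0 x u : ffun_cons x u ord0 = x.
Proof. by rewrite ffunE unlift_none. Qed.

Lemma ffun_consS x u i : ffun_cons x u (lift ord0 i) = u i.
Proof. by rewrite ffunE liftK. Qed.

Lemma big_ffun_cons (R : Type) (idx : R) (op : Monoid.com_law idx)
    (F : {ffun 'I_m.+1 -> T} -> R) :
  \big[op/idx]_(u : {ffun 'I_m.+1 -> T}) F u =
  \big[op/idx]_(x : T) \big[op/idx]_(u : {ffun 'I_m -> T}) F (ffun_cons x u).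
Proof.
rewrite pair_bigA (reindex (fun p => ffun_cons p.1 p.2)) //=.
exists (fun u => (u ord0, [ffun i => u (lift ord0 i)])) => [[x u] _|u _] /=.
  by rewrite ffun_cons0; congr pair; apply/ffunP => i; rewrite ffunE ffun_consS.
apply/ffunP => i; rewrite ffunE.
by case: unliftP => [i'|] ->; rewrite ?ffunE.
Qed.

Lemma big_ord_recl_ffun_cons (R : Type) (idx : R) (op : Monoid.law idx)
    (F : 'I_m.+1 -> T -> R) x u :
  \big[op/idx]_(i < m.+1) F i (ffun_cons x u i) =
  op (F ord0 x) (\big[op/idx]_(i < m) F (lift ord0 i) (u i)).
Proof.
rewrite big_ord_recl ffun_cons0; congr (op _ _).
by apply: eq_bigr => i _; rewrite ffun_consS.
Qed.

End FfunCons.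

Section Multinomial.
Variables (F : numFieldType) (V : comAlgType F).

Local Notation "n `!^-1" := ((n`!)%:R^-1 : F) (at level 2, format "n `!^-1").

Lemma exprDn_fact (x y : V) n :
  n`!^-1 *: (x + y) ^+ n =
  \sum_(k < n.+1) ((n - k)`!^-1 *: x ^+ (n - k)) * (k`!^-1 *: y ^+ k).
Proof.
rewrite exprDn scaler_sumr; apply: eq_bigr => k _.
rewrite -scaler_nat scalerA -scalerAl -scalerAr scalerA; congr (_ *: _).
have kn : (k <= n)%N by rewrite -ltnS.
have bin_neq0 : ('C(n, k))%:R != 0 :> F by rewrite pnatr_eq0 -lt0n bin_gt0.
by rewrite -(bin_fact kn) !natrM !invfM mulrC mulVKf // mulrC.
Qed.

Lemma multinomial N m (x : 'I_m -> V) n : (n <= N)%N ->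
  n`!^-1 *: (\sum_(i < m) x i) ^+ n =
  \sum_(u : {ffun 'I_m -> 'I_N.+1} | (\sum_(i < m) u i)%N == n)
     \prod_(i < m) ((u i)`!^-1 *: x i ^+ u i).
Proof.
elim: m x n => [|m IHm] x n nN.
  rewrite big_ord0; case: n {nN} => [|n]; last first.
    by rewrite big_pred0 ?expr0n ?scaler0 // => u; rewrite big_ord0.
  rewrite (big_pred1 [ffun=> ord0]) => [|u]; last first.
    by rewrite big_ord0 eqxx; apply/esym/eqP/ffunP => -[].
  by rewrite big_ord0 fact0 invr1 scale1r.
pose G k := ((n - k)`!^-1 *: (\sum_(i < m) x (lift ord0 i)) ^+ (n - k)) *
  (k`!^-1 *: x ord0 ^+ k).
rewrite big_ord_recl addrC exprDn_fact (big_ord_widen N.+1 G) //.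
rewrite [RHS]big_mkcond big_ffun_cons [LHS]big_mkcond /=.
apply: eq_bigr => j _.
under eq_bigr do rewrite
  (big_ord_recl_ffun_cons _ (fun _ (k : 'I_N.+1) => nat_of_ord k))
  (big_ord_recl_ffun_cons _ (fun i (k : 'I_N.+1) => k`!^-1 *: x i ^+ k)).
rewrite /= ltnS; case: leqP => [jn|nj]; last first.
  by rewrite big1 // => u _; rewrite gtn_eqF // ltn_addr.
rewrite /G IHm ?(leq_trans (leq_subr _ _)) // mulr_suml big_mkcond /=.
apply: eq_bigr => u _; rewrite -(eqn_add2l j) subnKC //.
by case: eqP; rewrite // mulrC.
Qed.

End Multinomial.

Lemma big_tagged (R : Type) (idx : R) (op : Monoid.com_law idx)
    (I : finType) (T_ : I -> finType) (Q : pred {i : I & T_ i})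
    (F : {i : I & T_ i} -> R) :
  \big[op/idx]_(p | Q p) F p =
  \big[op/idx]_(i : I) \big[op/idx]_(k : T_ i | Q (Tagged T_ k)) F (Tagged T_ k).
Proof.
rewrite (sig_big_dep predT (fun i k => Q (Tagged T_ k))
  (fun i k => F (Tagged T_ k))).
by apply: eq_big => [[i k]|[i k]].
Qed.

Lemma big_ord_lt_const (R : Type) (idx : R) (op : Monoid.law idx) n v x :
  (v <= n)%N -> \big[op/idx]_(k < n | (k < v)%N) x = iter v (op x) idx.
Proof. by move=> vn; rewrite (big_ord_narrow vn) big_const_ord. Qed.

Section Rays.
Variables (m : nat) (a : 'I_m -> nat).

Definition first_copies (v : 'I_m -> nat) : {set tE a} :=
  [set j : tE a | (tagged j < v (tag j))%N].

Lemma card_first_copies_pre v S : (forall i, v i <= a i)%N ->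
  #|first_copies v :&: pre a S| = (\sum_(i in S) v i)%N.
Proof.
move=> va; rewrite -sum1_card big_tagged [RHS]big_mkcond /=.
apply: eq_bigr => i _.
rewrite (eq_bigl [pred k : 'I_(a i) | (i \in S) && (k < v i)%N]) => [|k].
  case: (i \in S); last by rewrite big_pred0.
  by rewrite big_ord_lt_const // iter_addn_0 mul1n.
by rewrite !inE andbC.
Qed.

Lemma card_first_copies v : (forall i, v i <= a i)%N ->
  #|first_copies v| = (\sum_(i < m) v i)%N.
Proof.
move=> va; rewrite -(setIT (first_copies v)).
have -> : [set: tE a] = pre a setT by apply/setP => j; rewrite !inE.
by rewrite card_first_copies_pre //; apply: eq_bigl => i; rewrite inE.
Qed.

Lemma chainpart_inr (T : {set tE a}) : chainpart (inr @: T) = set0.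
Proof. by apply/setP => S; rewrite !inE; apply/imsetP => -[]. Qed.

Lemma indpart_inr (T : {set tE a}) : indpart (inr @: T) = T.
Proof. by apply/setP => j; rewrite inE (mem_imset _ _ (@inr_inj _ _)). Qed.

Lemma is_cone_inr (T : {set tE a}) : is_cone (inr @: T).
Proof.
rewrite /is_cone chainpart_inr; apply/andP; split.
  by apply/forall_inP => S; rewrite inE.
by apply/forallP => A; apply/implyP => _; apply/forall_inP => S; rewrite inE.
Qed.

Lemma not_cone_inl_inr (S : propS m) (T : {set tE a}) i :
  i \notin val S -> pre a [set i] \subset T -> ~~ is_cone (inl S |: inr @: T).
Proof.
move=> iS preT; apply/negP => /andP [_ /forallP /(_ [set i]) /implyP].
have -> : indpart (inl S |: inr @: T) = T.
  by apply/setP => j; rewrite !inE (mem_imset _ _ (@inr_inj _ _)).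
move=> /(_ preT) /forall_inP /(_ S); rewrite !inE eqxx sub1set => /(_ isT).
exact/negP.
Qed.

Lemma mono_inr (T : {set tE a}) : mono (inr @: T) = \prod_(j in T) X (inr j).
Proof. by rewrite /mono big_imset //; apply: in2W; apply: inr_inj. Qed.

Lemma linrelE j : linrel j = X (inr j) - hvar a (tag j).
Proof.
rewrite /linrel big_sumType /= addrC; congr (_ + _).
  rewrite (bigD1 j) //= eqxx scale1r big1 ?addr0 // => k /negbTE nkj.
  by rewrite eq_sym nkj scale0r.
rewrite /hvar -sumrN [RHS]big_mkcond /=; apply: eq_bigr => S _.
by case: ifP; rewrite ?scale0r ?scaleN1r.
Qed.

Lemma prod_hvar_first_copies v : (forall i, v i <= a i)%N ->
  \prod_(i < m) hvar a i ^+ v i = \prod_(j in first_copies v) hvar a (tag j).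
Proof.
move=> va; rewrite big_tagged; apply: eq_bigr => i _.
rewrite (eq_bigl (fun k : 'I_(a i) => (k < v i)%N)) => [|k]; last by rewrite inE.
by rewrite /= big_ord_lt_const // iter_mulr_1.
Qed.

Variable P : polymatroid a.

Lemma in_SigmaP_inr (T : {set tE a}) :
  in_SigmaP P (inr @: T) =
  [forall T' : {set tE a}, (T' \subset T) ==> (#|T'| <= prk P (img T'))%N].
Proof.
rewrite /in_SigmaP is_cone_inr indpart_inr chainpart_inr.
have no_chain (Q : pred (propS m)) : [forall S in set0, Q S].
  by apply/forall_inP => S; rewrite inE.
by rewrite !no_chain andbT.
Qed.

Lemma in_SigmaP_first_copies v : (forall i, v i <= a i)%N ->
  (\sum_(i < m) v i)%N = prank P ->
  in_SigmaP P (inr @: first_copies v) = in_base P v.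
Proof.
move=> va sv; rewrite in_SigmaP_inr /in_base sv eqxx andbT.
apply/forallP/forallP => H S.
  have := implyP (H (first_copies v :&: pre a S)) (subsetIl _ _).
  rewrite card_first_copies_pre // => /leq_trans; apply; apply: prk_mono.
  by apply/subsetP => x /imsetP [j]; rewrite !inE => /andP [_ jS] ->.
apply/implyP => /subsetP ST; apply: leq_trans (H (img S)).
rewrite -card_first_copies_pre //; apply/subset_leq_card/subsetP => j jS.
by rewrite inE ST //= inE imset_f.
Qed.

End Rays.

Section DegreeMap.
Variables (m : nat) (a : 'I_m -> nat) (P : polymatroid a).
Variable L : {mpoly rat[nvar a]} -> rat.
Hypothesis hL : deg_spec P L.

Local Notation MP := {mpoly rat[nvar a]}.

Lemma L_lin c p q : L (c *: p + q) = c * L p + L q.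
Proof. by case: hL. Qed.

Lemma L0 : L 0 = 0.
Proof.
have := L_lin 1 0 0; rewrite scaler0 addr0 mul1r -{1}[L 0]addr0.
by move=> /addrI/esym.
Qed.

Lemma L_add p q : L (p + q) = L p + L q.
Proof. by have := L_lin 1 p q; rewrite scale1r mul1r. Qed.

Lemma L_scale c p : L (c *: p) = c * L p.
Proof. by rewrite -[c *: p]addr0 L_lin L0 addr0. Qed.

Lemma L_sum (I : Type) (r : seq I) (Q : pred I) (F : I -> MP) :
  L (\sum_(i <- r | Q i) F i) = \sum_(i <- r | Q i) L (F i).
Proof. exact: (big_morph L L_add L0). Qed.

(* [p] and [q] have the same image in A(P). *)
Definition deg_equiv (p q : MP) := forall s, L (s * p) = L (s * q).

Lemma deg_equiv_prod (I : Type) (r : seq I) (Q : pred I) (F G : I -> MP) :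
  (forall i, Q i -> deg_equiv (F i) (G i)) ->
  deg_equiv (\prod_(i <- r | Q i) F i) (\prod_(i <- r | Q i) G i).
Proof.
move=> FG; apply: (big_ind2 deg_equiv) => // p q p' q' pq pq' s.
by rewrite mulrA pq' mulrAC pq mulrAC -mulrA.
Qed.

Lemma deg_equiv_hvar j : deg_equiv (hvar a (tag j)) (X (inr j)).
Proof.
move=> s; case: hL => _ _ L_linrel _ _.
have := L_linrel s j; rewrite linrelE mulrBr addrC -scaleN1r L_lin mulN1r.
by move=> /eqP; rewrite addrC subr_eq0 => /eqP/esym.
Qed.

Lemma deg_equiv_prod_hvar (T : {set tE a}) :
  deg_equiv (\prod_(j in T) hvar a (tag j)) (mono (inr @: T)).
Proof.
by rewrite mono_inr; apply: deg_equiv_prod => j _; apply: deg_equiv_hvar.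
Qed.

Lemma L_hvar_overflow i s : L (s * hvar a i ^+ (a i).+1) = 0.
Proof.
pose v i' := if i' == i then a i else 0%N.
have va i' : (v i' <= a i')%N by rewrite /v; case: eqP => [->|].
have hv : hvar a i ^+ a i = \prod_(i' < m) hvar a i' ^+ v i'.
  rewrite (bigD1 i) // big1 => [|i' /negbTE i'i]; last by rewrite /v i'i expr0.
  by rewrite /= mulr1 /v eqxx.
rewrite exprS mulrA hv prod_hvar_first_copies // deg_equiv_prod_hvar.
rewrite /hvar mulr_sumr mulr_suml L_sum big1 // => S iS.
rewrite -mulrA /mono -big_setU1; last by apply/imsetP => -[].
case: hL => _ L_noncone _ _ _; apply/L_noncone/(not_cone_inl_inr iS)/subsetP.
by move=> [i' k]; rewrite !inE => /eqP /= i'i; subst i'; rewrite /v eqxx.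
Qed.

Lemma L_prod_hvar u : (\sum_(i < m) u i)%N = prank P ->
  L (\prod_(i < m) hvar a i ^+ u i) = (in_base P u)%:R.
Proof.
move=> su; have [/forallP ua | /forallPn [i]] := boolP [forall i, u i <= a i]%N.
  rewrite prod_hvar_first_copies // -[\prod_(j in _) _]mul1r.
  rewrite deg_equiv_prod_hvar mul1r; case: hL => _ _ _ _ L_cone.
  rewrite L_cone ?is_cone_inr ?in_SigmaP_first_copies //.
  by rewrite card_imset ?card_first_copies //; apply: inr_inj.
rewrite -ltnNge => aiu.
rewrite (bigD1 i) //= -(subnK aiu) exprD mulrAC L_hvar_overflow.
suff /negbTE -> : ~~ in_base P u by [].
apply/negP => /andP [/forallP /(_ [set i])]; rewrite big_set1 => ui _.
by have := leq_trans ui (prk_type P i); rewrite leqNgt aiu.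
Qed.

End DegreeMap.

Theorem corollary1p4 (m : nat) (a : 'I_m -> nat) (ha : forall i, (0 < a i)%N)
    (P : polymatroid a) (L : {mpoly rat[nvar a]} -> rat) (hL : deg_spec P L)
    (t : 'I_m -> rat) :
  ((prank P)`!%:R)^-1 * L ((\sum_(i < m) t i *: hvar a i) ^+ prank P) =
  \sum_(u : {ffun 'I_m -> 'I_(prank P).+1} | in_base P (fun i => nat_of_ord (u i)))
     \prod_(i < m) (t i ^+ u i / ((u i)`!)%:R).
Proof.
rewrite -(L_scale hL) (multinomial _ (leqnn _)) (L_sum hL).
rewrite [RHS]big_mkcond [LHS]big_mkcond /=; apply: eq_bigr => u _.
have [su|] := eqP; last by case: ifP => // /andP [_ /eqP].
under eq_bigr do rewrite exprZn scalerA mulrC.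
rewrite scaler_prod (L_scale hL) (L_prod_hvar hL) //.
by case: in_base; rewrite ?mulr1 ?mulr0.
Qed.
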